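(* Let $(V,E)$ be a graph with $|V|=n$. Then $|\{X\subseteq V\mid X \text{ is a clique}\}|\cdot|\{Y\subseteq V \mid Y\text{ is a coclique}\}| \le (n+1)2^n$.
   Context: A graph is a finite simple undirected graph $(V,E)$. A clique is a set $X\subseteq V$ with every two distinct vertices adjacent; a coclique is a set $Y\subseteq V$ with no two distinct vertices adjacent (the empty set and singletons count as both). *)

From mathcomp Require Import all_boot.
Set Implicit Arguments. Unset Strict Implicit. Unset Printing Implicit Defensive.

Definition simple_graph (T : finType) (e : rel T) : Prop :=
  symmetric e /\ irreflexive e.

Definition is_clique (T : finType) (e : rel T) (X : {set T}) : bool :=
  [forall x in X, forall y in X, (x != y) ==> e x y].

Definition is_coclique (T : finType) (e : rel T) (Y : {set T}) : bool :=
  [forall x in Y, forall y in Y, (x != y) ==> ~~ e x y].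

From mathcomp Require Import all_boot.
From mathcomp Require Import zify.

Set Implicit Arguments.
Unset Strict Implicit.
Unset Printing Implicit Defensive.

(* Write c(U) and i(U) for the numbers of cliques and cocliques
   contained in a vertex set U.  Cocliques of e are exactly the cliques of the
   complementary relation, so every counting fact about cliques of an
   arbitrary relation applies to both.  We prove c(U) * i(U) <= (|U|+1) 2^|U|
   by induction on |U|.  Pick v in U, put U' = U \ v and split U' into the
   neighbourhood A and the non-neighbourhood B of v.  Then
     c(U) <= c(U') + c(A),   i(U) <= i(U') + i(B)      (delete or keep v),
     c(U') <= c(A) c(B),     i(U') <= i(A) i(B)        (restrict to A and B),
   together with the trivial bound c, i <= 2^|.|.  Expanding the product and
   using the induction hypothesis for U', A and B gives the bound for U; this
   last computation is the arithmetic lemma [product_bound_step]. *)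

(* The arithmetic of the induction step, with P = 2^|A| and Q = 2^|B|:
   c <= c' + cA and i <= i' + iB, and the four products are bounded by the
   induction hypotheses; these four bounds add up to exactly (|U|+1) 2PQ. *)
Lemma product_bound_step (a b P Q c i c' i' cA iB : nat) :
  c <= c' + cA -> i <= i' + iB ->
  c' * i' <= (a + b).+1 * (P * Q) ->
  c' * iB <= P * (b.+1 * Q) ->
  cA * i' <= a.+1 * P * Q ->
  cA * iB <= P * Q ->
  c * i <= (a + b).+2 * (2 * (P * Q)).
Proof.
move=> hc hi h1 h2 h3 h4.
have hci : c * i <= c' * i' + c' * iB + (cA * i' + cA * iB).
  by apply: leq_trans (leq_mul hc hi) _; rewrite mulnDl !mulnDr addnA.
apply: leq_trans hci _; nia.
Qed.

Section CliqueCounting.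
Variable T : finType.

Definition cliques_in (r : rel T) (U : {set T}) : {set {set T}} :=
  [set X : {set T} | (X \subset U) && is_clique r X].

Definition co_rel (r : rel T) : rel T := fun x y => ~~ r x y.

Lemma clique_sub {r : rel T} {X Y : {set T}} :
  X \subset Y -> is_clique r Y -> is_clique r X.
Proof.
move=> sXY /forall_inP cY; apply/forall_inP => x xX; apply/forall_inP => y yX.
by move/forall_inP: (cY x (subsetP sXY x xX)); apply; apply: (subsetP sXY).
Qed.

Lemma card_cliques_in_pow (r : rel T) (U : {set T}) :
  #|cliques_in r U| <= 2 ^ #|U|.
Proof.
rewrite -card_powerset; apply: subset_leq_card; apply/subsetP => X.
by rewrite !inE => /andP[].
Qed.

(* Submultiplicativity: a clique in A :|: B is determined by its traces on
   A and on B, which are cliques in A and in B. *)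
Lemma card_cliques_in_setU (r : rel T) (A B : {set T}) :
  #|cliques_in r (A :|: B)| <= #|cliques_in r A| * #|cliques_in r B|.
Proof.
rewrite -cardsX.
pose traces (X : {set T}) := (X :&: A, X :&: B).
have traces_inj : {in cliques_in r (A :|: B) &, injective traces}.
  move=> X Y; rewrite !inE => /andP[sX _] /andP[sY _] [eA eB].
  by rewrite -(setIidPl sX) -(setIidPl sY) !setIUr eA eB.
rewrite -(card_in_imset traces_inj); apply: subset_leq_card.
apply/subsetP => _ /imsetP[X + ->]; rewrite !inE /= => /andP[_ cX].
by rewrite !subsetIr !(clique_sub (subsetIl _ _) cX).
Qed.

(* Vertex deletion: a clique in U either avoids v, or consists of v together
   with a clique in the neighbourhood of v inside U :\ v. *)
Lemma card_cliques_in_del (r : rel T) (U : {set T}) (v : T) :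
  #|cliques_in r U| <=
    #|cliques_in r (U :\ v)| + #|cliques_in r ((U :\ v) :&: [set y | r v y])|.
Proof.
apply: leq_trans (leq_add (leqnn _) (leq_imset_card (fun Z => v |: Z) _)).
apply: leq_trans (leq_card_setU _ _); apply: subset_leq_card.
apply/subsetP => X; rewrite inE => /andP[sXU cX]; apply/setUP.
have [vX | vNX] := boolP (v \in X).
  right; apply/imsetP; exists (X :\ v); last by rewrite setD1K.
  rewrite inE (clique_sub (subsetDl _ _) cX) andbT.
  apply/subsetP => y; rewrite !inE => /andP[yv yX].
  rewrite yv (subsetP sXU _ yX) /=.
  by move/forall_inP: cX => /(_ v vX) /forall_inP /(_ y yX); rewrite eq_sym yv.
left; rewrite inE cX andbT; apply/subsetP => y yX.
rewrite !inE (subsetP sXU _ yX) andbT.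
by apply: contraNneq vNX => <-.
Qed.

Lemma cliques_cocliques_in (r : rel T) (U : {set T}) :
  #|cliques_in r U| * #|cliques_in (co_rel r) U| <= #|U|.+1 * 2 ^ #|U|.
Proof.
have empty_case : #|cliques_in r set0| * #|cliques_in (co_rel r) set0| <=
    #|@set0 T|.+1 * 2 ^ #|@set0 T|.
  apply: leq_trans (leq_mul (card_cliques_in_pow r set0)
                             (card_cliques_in_pow (co_rel r) set0)) _.
  by rewrite cards0.
move: {2}#|U| (leqnn #|U|) => m.
elim: m U => [|m IH] U hU; have [-> // | [v vU]] := set_0Vmem U.
  by move: hU; rewrite (cardsD1 v U) vU.
set U' := U :\ v; set Nv := [set y | r v y].
set A := U' :&: Nv; set B := U' :\: Nv.
have cardU' : #|U'| = #|A| + #|B| by rewrite cardsID.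
have cardU : #|U| = #|U'|.+1 by rewrite (cardsD1 v U) vU.
have splitU' : U' = A :|: B by rewrite setID.
have coNv : U' :&: [set y | co_rel r v y] = B.
  by apply/setP => y; rewrite !inE andbC.
have IHU' := IH U' ltac:(lia).
have IHA := IH A ltac:(lia).
have IHB := IH B ltac:(lia).
rewrite cardU cardU' expnS expnD.
apply: (product_bound_step (cA := #|cliques_in r A|)
                           (iB := #|cliques_in (co_rel r) B|)).
- exact: card_cliques_in_del r U v.
- by rewrite -coNv; exact: card_cliques_in_del (co_rel r) U v.
- by rewrite -expnD -cardU'.
- rewrite -/U' {1}splitU'.
  apply: leq_trans (leq_mul (card_cliques_in_setU r A B) (leqnn _)) _.
  by rewrite -mulnA leq_mul ?card_cliques_in_pow.
- rewrite -/U' {1}splitU'.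
  apply: leq_trans (leq_mul (leqnn _) (card_cliques_in_setU _ A B)) _.
  by rewrite mulnA leq_mul ?card_cliques_in_pow.
- exact: leq_mul (card_cliques_in_pow r A) (card_cliques_in_pow _ B).
Qed.

End CliqueCounting.

Theorem lemma6 (T : finType) (e : rel T) (n : nat) :
  simple_graph e -> #|T| = n ->
  #|[set X : {set T} | is_clique e X]| * #|[set Y : {set T} | is_coclique e Y]|
    <= n.+1 * 2 ^ n.
Proof.
move=> _ <-; rewrite -cardsT.
have <- : cliques_in e setT = [set X | is_clique e X].
  by apply/setP => X; rewrite !inE subsetT.
have <- : cliques_in (co_rel e) setT = [set Y | is_coclique e Y].
  by apply/setP => Y; rewrite !inE subsetT.
exact: cliques_cocliques_in.
Qed.
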